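(* Let $w=a_{11}\cdots a_{1c_1}\,a_{21}\cdots a_{2c_2}\cdots a_{k1}\cdots a_{kc_k}$ be a column word with segments of lengths $c_1\ge c_2\ge\dots\ge c_k>0$. Then there exist positive integers $b_{ij}$ ($1\le i\le k$, $1\le j\le c_i$) such that $$w\sim^* b_{k1}b_{k-1,1}\cdots b_{11}b_{12}\cdots b_{1c_1}b_{22}\cdots b_{2c_2}\cdots b_{k2}\cdots b_{kc_k},$$ where $b_{11}>b_{21}>\dots>b_{k1}$ and $b_{11}\cdots b_{1c_1}\,|\,b_{22}\cdots b_{2c_2}\,|\cdots|\,b_{k2}\cdots b_{kc_k}$ is a column word (with segment lengths $c_1,c_2-1,\dots,c_k-1$, empty segments omitted).
   Context: A word is a finite sequence of positive integers. Twisted Knuth equivalence $\sim^*$ is the equivalence relation on words generated by: $u\,b\,a\,c\,v\sim^* u\,b\,c\,a\,v$ whenever $c\le b<a$, and $u\,a\,c\,b\,v\sim^* u\,c\,a\,b\,v$ whenever $c<b\le a$, for positive integers $a,b,c$ and arbitrary (possibly empty) words $u,v$. A column word is a word $a_{11}\cdots a_{1c_1}\,a_{21}\cdots a_{2c_2}\cdots a_{k1}\cdots a_{kc_k}$ (segments separated by $|$) with $c_1\ge c_2\ge\dots\ge c_k>0$ such that each segment is weakly decreasing ($a_{ij}\ge a_{i,j+1}$) and $a_{i+1,c_{i+1}-j}>a_{i,c_i-j}$ for all $0\le j<c_{i+1}$, $1\le i<k$. *)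

From mathcomp Require Import all_boot.
From Stdlib Require Import Relations.
Set Implicit Arguments. Unset Strict Implicit. Unset Printing Implicit Defensive.

Definition is_word (w : seq nat) : bool := all (fun x => 0 < x) w.

Inductive tk_step : seq nat -> seq nat -> Prop :=
| tk_rule1 (u v : seq nat) (a b c : nat) :
    is_word u -> is_word v -> 0 < a -> 0 < b -> 0 < c ->
    c <= b -> b < a ->
    tk_step (u ++ [:: b; a; c] ++ v) (u ++ [:: b; c; a] ++ v)
| tk_rule2 (u v : seq nat) (a b c : nat) :
    is_word u -> is_word v -> 0 < a -> 0 < b -> 0 < c ->
    c < b -> b <= a ->
    tk_step (u ++ [:: a; c; b] ++ v) (u ++ [:: c; a; b] ++ v).

Definition twisted_knuth_equiv : relation (seq nat) :=
  clos_refl_sym_trans (seq nat) tk_step.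

(* A column word, given by its list of segments [s_1; ...; s_k]:
   segment lengths c_1 >= ... >= c_k > 0, letters positive, each segment
   weakly decreasing, and a_{i+1, c_{i+1}-j} > a_{i, c_i - j} for
   0 <= j < c_{i+1}, i.e. comparing segments aligned at their right ends. *)
Definition is_column_word (ss : seq (seq nat)) : bool :=
  all is_word ss &&
  all (fun s => 0 < size s) ss &&
  sorted geq (map size ss) &&
  all (fun s => sorted geq s) ss &&
  [forall i : 'I_(size ss),
     (i.+1 < size ss) ==>
     [forall j : 'I_(size (nth [::] ss i.+1)),
        nth 0 (rev (nth [::] ss i)) j < nth 0 (rev (nth [::] ss i.+1)) j]].

Definition column_word_of (ss : seq (seq nat)) : seq nat := flatten ss.

From mathcomp Require Import all_boot zify.
From Stdlib Require Import Relation_Operators.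
Set Implicit Arguments. Unset Strict Implicit. Unset Printing Implicit Defensive.

(* Insert the first letter h of the last segment into the segment to its left: h replaces
   the largest smaller letter b, and twisted Knuth moves carry b to the front of that
   segment (rule 1 slides h leftwards past smaller letters, rule 2 moves b past larger
   ones).  Then b is inserted into the next segment to the left, and so on, until a letter
   z leaves the first segment.  The modified segments keep their lengths and still form a
   column word: for weakly decreasing segments the condition a | b amounts to
   #{y in b | y <= x} <= #{y in a | y < x} for every x, which insertion preserves.
   Induction on the number of segments straightens them, and z is smaller than the letter
   pushed out by their first round, which starts from a letter larger than b. *)

Local Notation "x ~* y" := (twisted_knuth_equiv x y) (at level 70).

Lemma is_word_cat u v : is_word (u ++ v) = is_word u && is_word v.
Proof. exact: all_cat. Qed.

Lemma is_word_flatten ss : is_word (flatten ss) = all is_word ss.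
Proof. by elim: ss => //= s ss IH; rewrite is_word_cat IH. Qed.

Lemma tk_step_ctx u v x y : is_word u -> is_word v -> tk_step x y ->
  tk_step (u ++ x ++ v) (u ++ y ++ v).
Proof.
move=> Wu Wv [] u0 v0 a b c Wu0 Wv0 *; rewrite -!catA !(catA u u0);
  [apply: tk_rule1 | apply: tk_rule2]; rewrite // is_word_cat; exact/andP.
Qed.

Lemma tk_equiv_ctx u v x y : is_word u -> is_word v -> x ~* y ->
  u ++ x ++ v ~* u ++ y ++ v.
Proof.
move=> Wu Wv; elim=> [x' y' /(tk_step_ctx Wu Wv) | x' | x' y' _ | x' y' z _ IH1 _ IH2].
- exact: rst_step.
- exact: rst_refl.
- exact: rst_sym.
- exact: rst_trans IH1 IH2.
Qed.

Lemma tk_equiv_rule1 a b c : 0 < c -> c <= b < a -> [:: b; c; a] ~* [:: b; a; c].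
Proof.
move=> c_gt0 /andP[cb ba]; apply/rst_sym/rst_step.
by apply: (@tk_rule1 [::] [::]) => //; lia.
Qed.

Lemma tk_equiv_rule2 a b c : 0 < c -> c < b <= a -> [:: a; c; b] ~* [:: c; a; b].
Proof.
move=> c_gt0 /andP[cb ba]; apply/rst_step.
by apply: (@tk_rule2 [::] [::]) => //; lia.
Qed.

Lemma tk_equiv_catl u x y : is_word u -> x ~* y -> u ++ x ~* u ++ y.
Proof. by move=> Wu /(tk_equiv_ctx Wu (isT : is_word [::])); rewrite !cats0. Qed.

Lemma tk_equiv_catr v x y : is_word v -> x ~* y -> x ++ v ~* y ++ v.
Proof. exact: (tk_equiv_ctx (isT : is_word [::])). Qed.

Lemma geq_trans : transitive geq.
Proof. by move=> y x z le_yx le_zy; apply: leq_trans le_zy le_yx. Qed.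

Lemma sorted_geq_head s z : sorted geq s -> z \in s -> z <= head 0 s.
Proof.
case: s => // x s /(order_path_min geq_trans) /allP le_x.
by rewrite inE => /predU1P[-> // | /le_x].
Qed.

(* Returns [(y, t)] when no letter of [t] is smaller than [y]. *)
Fixpoint col_bump (t : seq nat) (y : nat) : nat * seq nat :=
  if t is x :: r then
    if x < y then (x, y :: r) else let p := col_bump r y in (p.1, x :: p.2)
  else (y, [::]).

Section Insertion.

Variables (t : seq nat) (y : nat).
Local Notation b := (col_bump t y).1.
Local Notation t' := (col_bump t y).2.

Lemma size_col_bump : size t' = size t.
Proof. by elim: t => //= x r IH; case: ifP => //= _; rewrite IH. Qed.

Lemma perm_col_bump : perm_eq (b :: t') (y :: t).
Proof.
elim: t => //= x r IH; case: ifP => _; first by rewrite (perm_catCA [:: x] [:: y]).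
by rewrite (perm_catCA [:: _] [:: x]) perm_sym (perm_catCA [:: y] [:: x]) perm_cons perm_sym.
Qed.

Lemma col_bump_lt : has (fun x => x < y) t -> b < y.
Proof. by elim: t => //= x r IH; case: ifP. Qed.

Lemma mem_col_bumped : has (fun x => x < y) t -> b \in t.
Proof.
by elim: t => //= x r IH; case: ifP => [_|_ /IH]; rewrite inE ?eqxx // => ->; rewrite orbT.
Qed.

Lemma mem_col_inserted : has (fun x => x < y) t -> y \in t'.
Proof.
move=> lt_y; have := perm_mem perm_col_bump y; rewrite !inE eqxx /=.
by rewrite eq_sym (ltn_eqF (col_bump_lt lt_y)).
Qed.

Lemma col_bump_max x : sorted geq t -> x \in t -> x < y -> x <= b.
Proof.
elim: t => //= x0 r IH s_t; case: ifP => [_ x_t _ | le_y].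
  exact: (@sorted_geq_head (x0 :: r)) x_t.
rewrite inE => /predU1P[-> lt_x0 | ]; first by rewrite lt_x0 in le_y.
exact: IH (path_sorted s_t).
Qed.

End Insertion.

Lemma sorted_col_bump t y : sorted geq t -> sorted geq (col_bump t y).2.
Proof.
elim: t => //= x r IH s_t; case: ifP => [lt_xy | ge_xy] /=.
  case: r s_t {IH} => //= z r /andP[le_zx ->]; rewrite andbT.
  exact: leq_trans le_zx (ltnW lt_xy).
rewrite path_min_sorted; first exact: IH (path_sorted s_t).
apply/allP => z z_in; have : z \in y :: r.
  by rewrite -(perm_mem (perm_col_bump r y)) inE z_in orbT.
rewrite inE => /predU1P[-> | z_r]; first by rewrite /= leqNgt ge_xy.
by apply: (@sorted_geq_head (x :: r) _ s_t); rewrite inE z_r orbT.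
Qed.

Lemma col_bump_word t y :
  is_word t -> 0 < y -> 0 < (col_bump t y).1 /\ is_word (col_bump t y).2.
Proof.
move=> Wt y_gt0; have := perm_all (fun z => 0 < z) (perm_col_bump t y).
by rewrite /= y_gt0 [all _ t]Wt => /andP.
Qed.

Lemma tk_equiv_slide x r y : is_word (x :: r) -> sorted geq (x :: r) -> x < y ->
  x :: r ++ [:: y] ~* [:: x, y & r].
Proof.
elim: r x => [|x2 r IH] x W s_xr lt_xy; first exact: rst_refl.
move: W s_xr => /= /andP[x_gt0 W] /andP[le_x2x s_r].
have lt_x2y : x2 < y by exact: leq_ltn_trans lt_xy.
apply: rst_trans (tk_equiv_catl (u := [:: x]) _ (IH x2 W s_r lt_x2y)) _.
  by rewrite /is_word /= x_gt0.
have x2_gt0 : 0 < x2 by case/andP: W.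
apply: (@tk_equiv_catr r [:: x; x2; y] [:: x; y; x2]); first by case/andP: W.
by apply: tk_equiv_rule1 => //; apply/andP.
Qed.

Lemma col_bump_equiv t y :
  is_word t -> 0 < y -> sorted geq t -> has (fun x => x < y) t ->
  t ++ [:: y] ~* (col_bump t y).1 :: (col_bump t y).2.
Proof.
elim: t => //= x r IH W y_gt0 s_t; case: ifP => [lt_xy _ | ge_xy /= has_r].
  exact: tk_equiv_slide.
have /andP[x_gt0 Wr] := W.
have s_r := path_sorted s_t.
apply: rst_trans (tk_equiv_catl (u := [:: x]) _ (IH Wr y_gt0 s_r has_r)) _.
  by rewrite /is_word /= x_gt0.
have [b_gt0 Wt'] := col_bump_word Wr y_gt0.
have y_in := mem_col_inserted has_r.
case Et': (col_bump r y).2 y_in => [|h r''] y_in //=.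
have s_t' : sorted geq (h :: r'') by rewrite -Et'; exact: sorted_col_bump.
have le_hx : h <= x.
  have : h \in y :: r by rewrite -(perm_mem (perm_col_bump r y)) Et' !inE eqxx orbT.
  rewrite inE => /predU1P[-> | h_r]; first by rewrite leqNgt ge_xy.
  by apply: (@sorted_geq_head (x :: r) _ s_t); rewrite inE h_r orbT.
set b := (col_bump r y).1 in b_gt0 *.
have lt_bh : b < h := leq_trans (col_bump_lt has_r) (sorted_geq_head s_t' y_in).
apply: (@tk_equiv_catr r'' [:: x; b; h] [:: b; x; h]); first by move: Wt'; rewrite Et' => /andP[].
by apply: tk_equiv_rule2 => //; rewrite lt_bh.
Qed.

Definition seg_lt (a b : seq nat) : bool :=
  (size b <= size a) && [forall j : 'I_(size b), nth 0 (rev a) j < nth 0 (rev b) j].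

Lemma seg_ltP a b :
  reflect (size b <= size a /\ forall j, j < size b -> nth 0 (rev a) j < nth 0 (rev b) j)
          (seg_lt a b).
Proof.
apply: (iffP andP) => [[le_ba /forallP lt_ab] | [le_ba lt_ab]]; split=> //.
  by move=> j lt_j; apply: (lt_ab (Ordinal lt_j)).
by apply/forallP => j; apply: lt_ab.
Qed.

Lemma seg_lt_trans : transitive seg_lt.
Proof.
move=> b a c /seg_ltP[le_ba lt_ab] /seg_ltP[le_cb lt_bc]; apply/seg_ltP.
split=> [|j lt_j]; first exact: leq_trans le_ba.
exact: ltn_trans (lt_ab j (leq_trans lt_j le_cb)) (lt_bc j lt_j).
Qed.

Lemma seg_lt_has a b y : seg_lt a b -> y \in b -> has (fun x => x < y) a.
Proof.
move=> /seg_ltP[le_ba lt_ab]; rewrite -mem_rev => y_in.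
have lt_j : index y (rev b) < size b by rewrite -size_rev index_mem.
apply/hasP; exists (nth 0 (rev a) (index y (rev b))).
  by rewrite -mem_rev mem_nth // size_rev (leq_trans lt_j).
by rewrite -{2}(nth_index 0 y_in); apply: lt_ab.
Qed.

Lemma seg_lt_behead a b : seg_lt a b -> seg_lt (behead a) (behead b).
Proof.
case: b => [|y b]; first by rewrite /seg_lt /= => _; apply/forallP => -[].
case: a => // x a /seg_ltP[/= le_ba lt_ab]; apply/seg_ltP; split=> // j lt_j.
have := lt_ab j (leqW lt_j).
by rewrite !rev_cons !nth_rcons !size_rev lt_j (leq_trans lt_j).
Qed.

Lemma seg_lt_cons x a b : seg_lt a b -> seg_lt (x :: a) b.
Proof.
move=> /seg_ltP[le_ba lt_ab]; apply/seg_ltP; split=> [|j lt_j]; first exact: leqW.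
by rewrite rev_cons nth_rcons size_rev (leq_trans lt_j le_ba); apply: lt_ab.
Qed.

(* Equivalent to [seg_lt] on weakly decreasing segments (seg_lt_countP), and in this form
   stable under the replacement performed by [col_bump]. *)
Definition count_seg_lt (a b : seq nat) : Prop :=
  forall x, count (fun z => z <= x) b <= count (fun z => z < x) a.

Lemma nth_lt_count s i x : sorted leq s -> i < size s ->
  (nth 0 s i < x) = (i < count (fun z => z < x) s).
Proof.
elim: s i => // y s IH i s_ys; have s_s := path_sorted s_ys.
case: (ltnP y x) => [lt_yx | ge_yx].
  by case: i => [|i] /= lt_i; rewrite lt_yx //; apply: IH.
have ge_s : all (fun z => ~~ (z < x)) (y :: s).
  apply/allP => z; rewrite -leqNgt inE => /predU1P[-> // | z_s].
  by apply: leq_trans ge_yx _; apply: (allP (order_path_min leq_trans s_ys)).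
rewrite (eq_in_count (a2 := pred0)); last by move=> z /(allP ge_s)/negbTE.
rewrite count_pred0 ltn0 => lt_i; apply/negbTE/(allP ge_s); exact: mem_nth.
Qed.

Lemma seg_lt_countP a b :
  sorted geq a -> sorted geq b -> reflect (count_seg_lt a b) (seg_lt a b).
Proof.
move=> s_a s_b; have s_ra : sorted leq (rev a) by rewrite rev_sorted.
have s_rb : sorted leq (rev b) by rewrite rev_sorted.
apply: (iffP (seg_ltP a b)) => [[le_ba lt_ab] x | dom].
  rewrite -count_rev -(count_rev _ a).
  change (count (fun z => z < x.+1) (rev b) <= count (fun z => z < x) (rev a)).
  case E: count => [//|n].
  have lt_nb : n < size b by rewrite -size_rev -E count_size.
  have : nth 0 (rev b) n < x.+1 by rewrite (nth_lt_count _ s_rb) ?size_rev // E.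
  rewrite ltnS => /(leq_trans (lt_ab n lt_nb)) lt_x.
  by rewrite -(nth_lt_count _ s_ra) // size_rev (leq_trans lt_nb).
have key j : j < size b -> j < size a /\ nth 0 (rev a) j < nth 0 (rev b) j.
  move=> lt_jb; set y := nth 0 (rev b) j.
  have lt_j : j < count (fun z => z < y.+1) (rev b) by rewrite -nth_lt_count // size_rev.
  have := dom y; rewrite -(count_rev _ b) -(count_rev _ a) => /(leq_trans lt_j) {}lt_j.
  have lt_ja : j < size a by rewrite -(size_rev a) (leq_trans lt_j) ?count_size.
  by rewrite (nth_lt_count _ s_ra) ?size_rev.
split=> [|j /key[]//]; case E: (size b) => [//|n].
by case: (key n); rewrite ?E.
Qed.

Lemma count_ltn_leq y u :
  y \in u -> count (fun z => z < y) u < count (fun z => z <= y) u.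
Proof.
elim: u => //= z u IH; rewrite inE => /predU1P[-> | /IH]; last by case: ltngtP; lia.
by rewrite ltnn leqnn add1n ltnS; apply: sub_count => w /ltnW.
Qed.

Lemma count_seg_lt_col_bump t u u' y e :
  sorted geq t -> has (fun x => x < y) t -> count_seg_lt t u -> y \in u -> y < e ->
  perm_eq (y :: u') (e :: u) -> count_seg_lt (col_bump t y).2 u'.
Proof.
move=> s_t has_t dom y_u lt_ye perm_u x; have lt_by := col_bump_lt has_t.
have := permP (perm_col_bump t y) (fun z => z < x); have := permP perm_u (fun z => z <= x).
have := dom x; have := dom y; rewrite /=.
case: (ltngtP x y) => [lt_xy | lt_yx | ->] dom_y dom_x Cu Ct.
- rewrite (leqNgt e) (ltn_trans lt_xy lt_ye) /= in Cu.
  case: (ltnP (col_bump t y).1 x) Ct => [lt_bx | _] Ct; last by lia.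
  have eq_t : count (fun z => z < x) t = count (fun z => z < y) t.
    apply: eq_in_count => z z_t /=; apply/idP/idP => [/ltn_trans | lt_zy]; first exact.
    exact: leq_ltn_trans (col_bump_max s_t z_t lt_zy) lt_bx.
  have le_u : count (fun z => z <= x) u <= count (fun z => z < y) u.
    by apply: sub_count => z /= /leq_ltn_trans; apply.
  have := count_ltn_leq y_u; lia.
- rewrite (ltn_trans lt_by lt_yx) /= in Ct.
  case: (e <= x) Cu => /= Cu; lia.
- rewrite (leqNgt e) lt_ye /= in Cu; rewrite lt_by /= in Ct; lia.
Qed.

Lemma seg_lt_col_bump t u u' y e :
  sorted geq t -> sorted geq u -> sorted geq u' -> seg_lt t u -> y \in u -> y < e ->
  perm_eq (y :: u') (e :: u) -> seg_lt (col_bump t y).2 u'.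
Proof.
move=> s_t s_u s_u' lt_tu y_u lt_ye perm_u.
apply/(seg_lt_countP (sorted_col_bump _ s_t) s_u').
apply: (count_seg_lt_col_bump s_t (seg_lt_has lt_tu y_u) _ y_u lt_ye perm_u).
exact/(seg_lt_countP s_t s_u).
Qed.

(* The segments are listed from right to left. *)
Fixpoint cols_bump (rcs : seq (seq nat)) (y : nat) : nat * seq (seq nat) :=
  if rcs is t :: rcs' then
    let p := col_bump t y in let q := cols_bump rcs' p.1 in (q.1, p.2 :: q.2)
  else (y, [::]).

Lemma size_cols_bump rcs y : map size (cols_bump rcs y).2 = map size rcs.
Proof. by elim: rcs y => //= t rcs IH y; rewrite size_col_bump IH. Qed.

Lemma sorted_cols_bump rcs y :
  all (sorted geq) rcs -> all (sorted geq) (cols_bump rcs y).2.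
Proof. by elim: rcs y => //= t rcs IH y /andP[/sorted_col_bump -> /IH ->]. Qed.

Lemma cols_bump_word rcs y : all is_word rcs -> 0 < y ->
  0 < (cols_bump rcs y).1 /\ all is_word (cols_bump rcs y).2.
Proof.
elim: rcs y => //= t rcs IH y /andP[Wt Wr] y_gt0.
have [b_gt0 ->] := col_bump_word Wt y_gt0.
by have [-> ->] := IH _ Wr b_gt0.
Qed.

Definition seg_gt (a b : seq nat) : bool := seg_lt b a.

Lemma cols_bump_equiv rcs u y v :
  all is_word rcs -> all (sorted geq) rcs -> path seg_gt u rcs -> y \in u -> 0 < y ->
  is_word v ->
  flatten (rev rcs) ++ y :: v ~*
    (cols_bump rcs y).1 :: flatten (rev (cols_bump rcs y).2) ++ v.
Proof.
elim: rcs u y v => [|t rcs IH] u y v /=; first by move=> *; apply: rst_refl.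
move=> /andP[Wt Wr] /andP[s_t s_r] /andP[lt_tu chain] y_u y_gt0 Wv.
have has_t := seg_lt_has lt_tu y_u.
have [b_gt0 Wt'] := col_bump_word Wt y_gt0.
rewrite !rev_cons !flatten_rcons -!catA.
apply: rst_trans (IH t _ _ Wr s_r chain (mem_col_bumped has_t) b_gt0 _); last first.
  by rewrite is_word_cat Wt' Wv.
apply: tk_equiv_catl; first by rewrite is_word_flatten all_rev.
by have := tk_equiv_catr Wv (col_bump_equiv Wt y_gt0 s_t has_t); rewrite -catA.
Qed.

Lemma cols_bump_lt rcs u y y' :
  all (sorted geq) rcs -> path seg_gt u rcs -> y \in u -> y < y' ->
  (cols_bump rcs y).1 < (cols_bump (cols_bump rcs y).2 y').1.
Proof.
elim: rcs u y y' => //= t rcs IH u y y' /andP[s_t s_r] /andP[lt_tu chain] y_u lt_yy'.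
have has_t := seg_lt_has lt_tu y_u.
apply: IH chain (mem_col_bumped has_t) _ => //.
have y_t' := mem_col_inserted has_t.
exact: leq_trans (col_bump_lt has_t) (col_bump_max (sorted_col_bump y s_t) y_t' lt_yy').
Qed.

Lemma cols_bump_path rcs u u' y e :
  all (sorted geq) rcs -> sorted geq u -> sorted geq u' -> path seg_gt u rcs -> y \in u ->
  y < e -> perm_eq (y :: u') (e :: u) -> path seg_gt u' (cols_bump rcs y).2.
Proof.
elim: rcs u u' y e => //= t rcs IH u u' y e /andP[s_t s_r] s_u s_u' /andP[lt_tu chain].
move=> y_u lt_ye perm_u; have has_t := seg_lt_has lt_tu y_u.
rewrite [seg_gt _ _](seg_lt_col_bump s_t s_u s_u' lt_tu y_u lt_ye perm_u).
apply: IH s_r s_t (sorted_col_bump y s_t) chain (mem_col_bumped has_t) _ (perm_col_bump t y).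
exact: col_bump_lt.
Qed.

Lemma cols_bump_lt_rebump rcs u y :
  rcs != [::] -> all (sorted geq) rcs -> path seg_gt u rcs -> y \in u ->
  let: (z, rcs') := cols_bump rcs y in z < (cols_bump (behead rcs') (head 0 (head [::] rcs'))).1.
Proof.
case: rcs => //= t rcs _ /andP[s_t s_r] /andP[lt_tu chain] y_u.
have has_t := seg_lt_has lt_tu y_u.
apply: cols_bump_lt s_r chain (mem_col_bumped has_t) _.
have y_t' := mem_col_inserted has_t.
exact: leq_trans (col_bump_lt has_t) (sorted_geq_head (sorted_col_bump y s_t) y_t').
Qed.

Definition column_chain (ss : seq (seq nat)) : bool :=
  [&& all is_word ss, all (sorted geq) ss & sorted seg_lt ss].

Lemma column_chain_rev rcs :
  column_chain (rev rcs) = [&& all is_word rcs, all (sorted geq) rcs & sorted seg_gt rcs].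
Proof. by rewrite /column_chain !all_rev rev_sorted. Qed.

Lemma sorted_seg_ltE ss : sorted seg_lt ss =
  sorted geq (map size ss) &&
  [forall i : 'I_(size ss),
     (i.+1 < size ss) ==>
     [forall j : 'I_(size (nth [::] ss i.+1)),
        nth 0 (rev (nth [::] ss i)) j < nth 0 (rev (nth [::] ss i.+1)) j]].
Proof.
apply/(sortedP [::])/andP => [lt_ss | [/(sortedP 0) le_ss /forallP lt_ss] i lt_i].
  split; last by apply/forallP => i; apply/implyP => /lt_ss /andP[].
  apply/(sortedP 0) => i; rewrite size_map => lt_i.
  by rewrite !(nth_map [::]) ?(ltnW lt_i) //; case/andP: (lt_ss i lt_i).
apply/andP; split; last exact: implyP (lt_ss (Ordinal (ltnW lt_i))) lt_i.
by have := le_ss i; rewrite size_map !(nth_map [::]) ?(ltnW lt_i) //; apply.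
Qed.

Lemma is_column_wordE ss :
  is_column_word ss = all (fun s => 0 < size s) ss && column_chain ss.
Proof.
rewrite /is_column_word /column_chain sorted_seg_ltE.
by case: (all is_word ss); case: (all _ ss); case: (sorted geq _); case: (all _ ss).
Qed.

Lemma column_chain_rcons ss s :
  ss != [::] -> column_chain ss -> is_word s -> sorted geq s -> seg_lt (last [::] ss) s ->
  column_chain (rcons ss s).
Proof.
case: ss => // a ss _ /and3P[W S /= C] Ws Ss lt_s.
by rewrite /column_chain -rcons_cons !all_rcons Ws Ss W S /= rcons_path C lt_s.
Qed.

Lemma column_word_filter ss :
  column_chain ss -> is_column_word [seq s <- ss | 0 < size s].
Proof.
have all_filter_nonempty p : all p ss -> all p [seq s <- ss | 0 < size s].
  by move=> /allP p_ss; apply/allP => s; rewrite mem_filter => /andP[_ /p_ss].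
move=> /and3P[W S C]; rewrite is_column_wordE filter_all /column_chain.
by rewrite !all_filter_nonempty // (sorted_filter seg_lt_trans).
Qed.

Definition residual (bs : seq (seq nat)) : seq (seq nat) :=
  head [::] bs :: map behead (behead bs).

Lemma residual_rcons bs b :
  bs != [::] -> residual (rcons bs b) = rcons (residual bs) (behead b).
Proof. by case: bs => // c bs _; rewrite /residual /= map_rcons. Qed.

Lemma last_residual bs :
  last [::] (residual bs) \in [:: last [::] bs; behead (last [::] bs)].
Proof. by case: bs => [|b [|c bs]]; rewrite /residual /= ?last_map !inE eqxx ?orbT. Qed.

Lemma seg_lt_last_residual bs a b x :
  seg_lt a b -> last [::] bs = x :: behead a -> seg_lt (last [::] (residual bs)) (behead b).
Proof.
move=> lt_ab last_bs; move: (last_residual bs); rewrite last_bs !inE.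
by case/orP=> /eqP -> /=; [apply/seg_lt_cons | ]; apply: seg_lt_behead.
Qed.

Definition straightening (ss bs : seq (seq nat)) : Prop :=
  [/\ map size bs = map size ss, all is_word bs, sorted gtn (map (head 0) bs),
      column_chain (residual bs)
    & flatten ss ~* rev (map (head 0) bs) ++ flatten (map behead bs)].

Lemma straightening_rcons init s init' bs' z :
  straightening init' bs' -> bs' != [::] -> map size init' = map size init ->
  0 < z -> z < head 0 (last [::] bs') -> 0 < size s ->
  is_word (behead s) -> sorted geq (behead s) ->
  seg_lt (last [::] (residual bs')) (behead s) ->
  flatten (rcons init s) ~* z :: flatten init' ++ behead s ->
  straightening (rcons init s) (rcons bs' (z :: behead s)).
Proof.
move=> [size_bs' W' gt_bs' ch_bs' eqv_bs'] bs'_ne size_init' z_gt0 lt_z s_gt0.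
move=> Ws Ss lt_s eqv_s.
split.
- by rewrite !map_rcons size_bs' size_init' /= size_behead prednK.
- by rewrite all_rcons W' andbT /is_word /= z_gt0.
- case: bs' bs'_ne gt_bs' lt_z {size_bs' W' ch_bs' eqv_bs' lt_s eqv_s} => // b bs' _.
  by rewrite /= map_rcons rcons_path last_map => -> .
- by rewrite residual_rcons //; apply: column_chain_rcons.
- apply: rst_trans eqv_s _; rewrite map_rcons rev_rcons map_rcons flatten_rcons /=.
  have := tk_equiv_catr Ws eqv_bs'; rewrite -catA.
  by apply: (tk_equiv_catl (u := [:: z])); rewrite /is_word /= z_gt0.
Qed.

Lemma straightening1 s : 0 < size s -> column_chain [:: s] -> straightening [:: s] [:: s].
Proof.
move=> s_gt0 ch; split=> //=; first by case/and3P: ch => /andP[->].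
by case: s s_gt0 {ch} => //= h s _; apply: rst_refl.
Qed.

Definition bumped (ss : seq (seq nat)) : nat :=
  (cols_bump (behead (rev ss)) (head 0 (last [::] ss))).1.

(* The equation for [last bs] lets the induction compare successive first letters. *)
Lemma exists_straightening n ss :
  size ss = n.+1 -> all (fun s => 0 < size s) ss -> column_chain ss ->
  exists2 bs, straightening ss bs & last [::] bs = bumped ss :: behead (last [::] ss).
Proof.
elim: n ss => [|n IH] ss.
  case: ss => [|s [|]] //= _ /andP[s_gt0 _] ch; exists [:: s]; first exact: straightening1.
  by case: s s_gt0 {ch}.
case/lastP: ss => // init s; rewrite size_rcons all_rcons.
move=> -[size_init] /andP[s_gt0 init_gt0].
rewrite -{1}[rcons init s]revK rev_rcons column_chain_rev.
move=> /and3P[/andP[Ws Wr] /andP[Ss Sr] /= chain].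
have rinit_ne : rev init != [::] by rewrite -size_eq0 size_rev size_init.
case: s s_gt0 Ws Ss chain => // h s' _ /andP[h_gt0 Ws'] Ss chain.
(* Removing h from the last segment is treated as replacing it by h.+1, a letter that
   [seg_lt_behead] drops again. *)
have Ss' : sorted geq (h.+1 :: s') := path_le geq_trans (leqnSn h) Ss.
have perm_s : perm_eq [:: h, h.+1 & s'] [:: h.+1, h & s'].
  by rewrite (perm_catCA [:: h] [:: h.+1]).
have path' := cols_bump_path Sr Ss Ss' chain (mem_head h s') (ltnSn h) perm_s.
have equiv := cols_bump_equiv Wr Sr chain (mem_head h s') h_gt0 Ws'.
have lt_z := cols_bump_lt_rebump rinit_ne Sr chain (mem_head h s').
have [z_gt0 W'] := cols_bump_word Wr h_gt0.
have S' := sorted_cols_bump h Sr; have size' := size_cols_bump (rev init) h.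
have bumped_ss : bumped (rcons init (h :: s')) = (cols_bump (rev init) h).1.
  by rewrite /bumped rev_rcons last_rcons.
move: (cols_bump (rev init) h) => [z rinit'] /= in path' equiv lt_z z_gt0 W' S' size' bumped_ss.
rewrite revK in equiv; case: rinit' path' equiv lt_z W' S' size' => // t' rest'.
move=> /andP[lt_t's' chain'] equiv lt_z W' S' size'.
have ch' : column_chain (rev (t' :: rest')) by rewrite column_chain_rev W' S'.
have size_init' : map size (rev (t' :: rest')) = map size init.
  by rewrite map_rev size' map_rev revK.
have size_ss' : size (rev (t' :: rest')) = n.+1.
  by rewrite -(size_map size) size_init' size_map.
have pos' : all (fun s => 0 < size s) (rev (t' :: rest')).
  by move: init_gt0; rewrite -!(all_map size (fun n => 0 < n)) size_init'.
have [bs' st' last_bs'] := IH _ size_ss' pos' ch'.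
have last_init' : last [::] (rev (t' :: rest')) = t' by rewrite rev_cons last_rcons.
rewrite last_init' /bumped revK last_init' in last_bs'.
exists (rcons bs' (z :: s')); last by rewrite !last_rcons bumped_ss.
apply: (@straightening_rcons _ (h :: s') _ _ _ st' _ size_init') z_gt0 _ _ Ws'
  (path_sorted Ss) _ _ => //.
- case: st' => size_bs' _ _ _ _.
  by rewrite -size_eq0 -(size_map size) size_bs' size_map size_rev.
- by rewrite last_bs'.
- exact: seg_lt_last_residual lt_t's' last_bs'.
- by rewrite flatten_rcons.
Qed.

Unset Implicit Arguments.
Theorem lemma4p4 (ss : seq (seq nat)) :
  is_column_word ss ->
  exists bs : seq (seq nat),
    [/\ map size bs = map size ss,
        all is_word bs,
        sorted gtn (map (head 0) bs),
        is_column_word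
          [seq s <- head [::] bs :: map behead (behead bs) | 0 < size s]
      & twisted_knuth_equiv (flatten ss)
          (rev (map (head 0) bs) ++ flatten (map behead bs))].
Proof.
rewrite is_column_wordE => /andP[nonempty ch].
case E: (size ss) => [|n].
  move/eqP: E; rewrite size_eq0 => /eqP ->; exists [::].
  by split=> //; [exact: column_word_filter | exact: rst_refl].
have [bs [size_bs W gt_bs ch_bs eqv] _] := exists_straightening E nonempty ch.
by exists bs; split=> //; apply: column_word_filter.
Qed.
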